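(* Let $\Gamma=\langle V,(w_u)_{u\in V},\alpha,\beta\rangle$ be a celebrity game with $\beta>1$ and let $W=\sum_{u\in V}w_u$. Then: (i) if $\Gamma$ is a star celebrity game, $PoS(\Gamma)=1$; (ii) if $\Gamma$ is not a star celebrity game and $\alpha\ge W$, then $PoS(\Gamma)=PoA(\Gamma)=1$; (iii) if $\Gamma$ is not a star celebrity game and $\alpha<W$, then $PoS(\Gamma)=PoA(\Gamma)=W/\alpha>1$.
   Context: A celebrity game $\Gamma=\langle V,(w_u)_{u\in V},\alpha,\beta\rangle$ consists of a set of players $V=\{1,\dots,n\}$, celebrity weights $w_u>0$, a link cost $\alpha>0$ and a critical distance $\beta$ with $1\le\beta\le n-1$. A strategy of player $u$ is a set $S_u\subseteq V\setminus\{u\}$; a strategy profile is $S=(S_1,\dots,S_n)$; its outcome graph $G[S]$ is the undirected graph on $V$ with edge set $\{\{u,v\}: u\in S_v\text{ or }v\in S_u\}$. With $d_G$ the graph distance (infinite between different connected components), the cost of player $u$ is $c_u(S)=\alpha|S_u|+\sum_{v:\,d_{G[S]}(u,v)>\beta}w_v$ and the social cost is $C(S)=\sum_{u\in V}c_u(S)$. $S$ is a Nash equilibrium (NE) if no player can strictly decrease its cost by changing only its own strategy; a graph is an NE graph of $\Gamma$ if it is $G[S]$ for some NE $S$. $\mathrm{opt}(\Gamma)=\min_S C(S)$, $PoA(\Gamma)=\max_{S\text{ NE}}C(S)/\mathrm{opt}(\Gamma)$ and $PoS(\Gamma)=\min_{S\text{ NE}}C(S)/\mathrm{opt}(\Gamma)$.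 $\Gamma$ is a star celebrity game if it has an NE graph that is connected. *)

From mathcomp Require Import all_boot all_order all_algebra.
Set Implicit Arguments. Unset Strict Implicit. Unset Printing Implicit Defensive.
Import Order.TTheory GRing.Theory Num.Theory.
Local Open Scope ring_scope.

Section Celebrity.
Variables (R : realFieldType) (n : nat).

Definition profile := {ffun 'I_n -> {set 'I_n}}.

Definition valid (S : profile) : bool := [forall u : 'I_n, u \notin S u].

Definition adj (S : profile) : rel 'I_n :=
  fun u v => (u \in S v) || (v \in S u).

Fixpoint ball (S : profile) (k : nat) (u : 'I_n) : {set 'I_n} :=
  match k with
  | 0 => [set u]
  | k'.+1 => ball S k' u :|: [set v | [exists x in ball S k' u, adj S x v]]
  end.

Variables (w : 'I_n -> R) (alpha : R) (beta : nat).

Definition cost (S : profile) (u : 'I_n) : R :=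
  alpha * #|S u|%:R + \sum_(v | v \notin ball S beta u) w v.

Definition social_cost (S : profile) : R := \sum_u cost S u.

Definition deviation (S S' : profile) (u : 'I_n) : Prop :=
  valid S' /\ forall v, v != u -> S' v = S v.

Definition is_NE (S : profile) : Prop :=
  valid S /\ forall u S', deviation S S' u -> cost S u <= cost S' u.

(* The empty profile, used only as a starting value for the minimum. *)
Definition empty_profile : profile := [ffun _ => set0].

Definition opt : R :=
  \big[Num.min/social_cost empty_profile]_(S : profile | valid S) social_cost S.

Definition PoA_is (r : R) : Prop :=
  (exists S, is_NE S /\ social_cost S / opt = r) /\
  (forall S, is_NE S -> social_cost S / opt <= r).

Definition PoS_is (r : R) : Prop :=
  (exists S, is_NE S /\ social_cost S / opt = r) /\
  (forall S, is_NE S -> r <= social_cost S / opt).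

Definition graph_connected (S : profile) : Prop :=
  forall u v : 'I_n, connect (adj S) u v.

Definition star_game : Prop := exists S, is_NE S /\ graph_connected S.

End Celebrity.

From mathcomp Require Import all_boot all_order all_algebra.
From mathcomp Require Import zify ring lra.
Set Implicit Arguments. Unset Strict Implicit. Unset Printing Implicit Defensive.
Import Order.TTheory GRing.Theory Num.Theory.

(* Every profile costs at least (n-1) min(alpha, W): a graph with c connected
   components has at least n - c links, and each of the c component
   representatives misses all players outside its component, hence pays at
   least W minus the weight of that component; together these are (c-1) W.
   Call v a loner when W - w v < alpha: a loner never buys a link in an
   equilibrium, since staying alone costs it less than a single link.
   If some c is such that no other player is a loner, the star centred at c
   (all other players buying a link to c) is an equilibrium of cost
   (n-1) alpha, which is optimal as beta >= 2.  Otherwise there are two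
   loners v1, v2.  In an equilibrium, whoever buys a link must keep both
   loners within distance beta (dropping the link would save alpha, more than
   a loner can contribute), so d(v1, v2) <= 2 beta; the last link of a
   shortest v1-v2 path is bought by its non-loner end z, and dropping it
   either keeps v1 within reach of z or v1 was out of reach anyway, again a
   profitable deviation.  Hence the empty graph, of cost (n-1) W, is the only
   equilibrium, and it is disconnected. *)

Section Balls.
Variable n : nat.
Implicit Types (S : profile n) (u v x : 'I_n).

Lemma adjC S : symmetric (adj S).
Proof. by move=> u v; rewrite /adj orbC. Qed.

Lemma ball0 S u v : (v \in ball S 0 u) = (v == u).
Proof. by rewrite /= inE. Qed.

Lemma ballS S k u v :
  (v \in ball S k.+1 u) = (v \in ball S k u) || [exists x in ball S k u, adj S x v].
Proof. by rewrite /= !inE. Qed.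

Lemma ballSP S k u v : v \in ball S k.+1 u ->
  v \in ball S k u \/ exists2 x, x \in ball S k u & adj S x v.
Proof.
by rewrite ballS => /orP [|/existsP [x /andP [hx ha]]]; [left | right; exists x].
Qed.

Lemma ball_refl S k u : u \in ball S k u.
Proof. by elim: k => [|k IH]; rewrite ?ball0 // ballS IH. Qed.

Lemma ball_step S k u v : v \in ball S k u -> v \in ball S k.+1 u.
Proof. by move=> h; rewrite ballS h. Qed.

Lemma ball_mono S k k' u v : (k <= k')%N -> v \in ball S k u -> v \in ball S k' u.
Proof.
move=> /subnK <-; elim: (k' - k)%N => [//|d IH] h; rewrite addSn; exact/ball_step/IH.
Qed.

Lemma ball_adj S k u x v : x \in ball S k u -> adj S x v -> v \in ball S k.+1 u.
Proof. by move=> hx ha; rewrite ballS; apply/orP; right; apply/existsP; exists x; rewrite hx. Qed.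

Lemma ball_trans S i j a b c :
  b \in ball S i a -> c \in ball S j b -> c \in ball S (i + j) a.
Proof.
move=> hb; elim: j c => [|j IH] c; first by rewrite ball0 addn0 => /eqP ->.
rewrite addnS => /ballSP [h|[x hx ha]]; first exact/ball_step/IH.
exact: ball_adj (IH _ hx) ha.
Qed.

Lemma ball_sym S k u v : v \in ball S k u -> u \in ball S k v.
Proof.
elim: k u v => [|k IH] u v; first by rewrite !ball0 eq_sym.
move=> /ballSP [h|[x hx ha]]; first exact/ball_step/IH.
have hx1 : x \in ball S 1 v by apply: ball_adj (ball_refl S 0 v) _; rewrite adjC.
exact: ball_trans hx1 (IH _ _ hx).
Qed.

Lemma ball_connect S k u v : v \in ball S k u -> connect (adj S) u v.
Proof.
elim: k v => [|k IH] v; first by rewrite ball0 => /eqP ->.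
move=> /ballSP [h|[x hx ha]]; first exact: IH.
exact: connect_trans (IH _ hx) (connect1 ha).
Qed.

Lemma connect_ball S u v : connect (adj S) u v -> exists k, v \in ball S k u.
Proof.
move=> /connectP [p]; elim: p u v => [|y p IH] u v /=.
  by move=> _ ->; exists 0%N; exact: ball_refl.
move=> /andP [ha hp] hv; have [k hk] := IH y v hp hv.
by exists (1 + k)%N; apply: ball_trans hk; exact: ball_adj (ball_refl S 0 u) ha.
Qed.

Lemma ball_last_link S k u v : v \in ball S k u -> u != v ->
  exists j z, [/\ (j < k)%N, z \in ball S j u, adj S z v & v \notin ball S j u].
Proof.
move=> hv huv; have [m hm m_min] := ex_minnP (ex_intro (fun m => v \in ball S m u) k hv).
case: m hm m_min => [|m] hm m_min; first by move: hm; rewrite ball0 eq_sym (negbTE huv).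
have far : v \notin ball S m u by apply/negP => /m_min; rewrite ltnn.
case/ballSP: hm => [hm|[z hz hzv]]; first by rewrite hm in far.
by exists m, z; split => //; exact: m_min hv.
Qed.

Lemma ball_subprofile S S' k u : (forall y, S' y \subset S y) ->
  ball S' k u \subset ball S k u.
Proof.
move=> hS; elim: k => [//|k IH]; apply/subsetP => v /ballSP [h|[x hx ha]].
  exact/ball_step/(subsetP IH).
apply: ball_adj (subsetP IH _ hx) _; move: ha; rewrite /adj.
by case/orP => h; apply/orP; [left|right]; apply: (subsetP (hS _)).
Qed.

Lemma ball_avoid S S' b k u :
  (forall x v, x != b -> v != b -> adj S x v -> adj S' x v) ->
  b \notin ball S k u -> ball S k u \subset ball S' k u.
Proof.
move=> hadj; elim: k => [//|k IH] hb.
have hb' : b \notin ball S k u by apply: contra hb; exact: ball_step.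
apply/subsetP => v /ballSP [h|[x hx ha]]; first exact/ball_step/(subsetP (IH hb')).
apply: ball_adj (subsetP (IH hb') _ hx) _; apply: hadj => //.
  by apply: contraNneq hb' => <-.
by apply: contraNneq hb => <-; exact: ball_adj hx ha.
Qed.

Lemma ball_isolated S k u : (forall v, ~~ adj S u v) -> ball S k u = [set u].
Proof.
move=> h; elim: k => [//|k IH]; apply/setP => v; rewrite ballS IH !inE.
case: eqP => //= _; apply/existsP => [[x /andP [hx ha]]].
by move: hx ha; rewrite inE => /eqP ->; rewrite (negbTE (h v)).
Qed.

Lemma ball_single_buyer S k u : (forall y, y != u -> S y = set0) ->
  ball S k u \subset u |: S u.
Proof.
move=> h; elim: k => [|k IH]; first by rewrite /= sub1set setU11.
apply/subsetP => v /ballSP [hv|[x hx ha]]; first exact: (subsetP IH).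
rewrite !inE; move: ha; rewrite /adj.
have [-> //|hvu] := eqVneq v u; rewrite (h v hvu) inE /=.
by have [-> ->|hxu] := eqVneq x u; rewrite // (h x hxu) inE.
Qed.

End Balls.

Section Components.
Variables (n : nat) (S : profile n).
Implicit Types (u v x : 'I_n).

Definition comp_root v := [arg min_(x < v | connect (adj S) v x) val x].

Lemma comp_root_spec v : connect (adj S) v (comp_root v) /\
  forall x, connect (adj S) v x -> (val (comp_root v) <= val x)%N.
Proof. by rewrite /comp_root; case: arg_minnP => [|r hr hmin]; first exact: connect0. Qed.

Lemma comp_root_eq u v : connect (adj S) u v -> comp_root u = comp_root v.
Proof.
move=> huv; have [hu mu] := comp_root_spec u; have [hv mv] := comp_root_spec v.
have hvu : connect (adj S) v u by rewrite (sym_connect_sym (adjC S)).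
apply/val_inj/eqP; rewrite eqn_leq (mu _ (connect_trans huv hv)).
exact: mv (connect_trans hvu hu).
Qed.

Lemma comp_root_idem v : comp_root (comp_root v) = comp_root v.
Proof. by apply/esym/comp_root_eq; case: (comp_root_spec v). Qed.

Definition roots := [set v | v == comp_root v].

Lemma roots_gt0 : (0 < n)%N -> (0 < #|roots|)%N.
Proof.
move=> n_gt0; rewrite card_gt0; apply/set0Pn.
by exists (comp_root (Ordinal n_gt0)); rewrite inE comp_root_idem.
Qed.

Lemma ex_ball_root v : exists k, v \in ball S k (comp_root v).
Proof. by apply: connect_ball; rewrite (sym_connect_sym (adjC S)); case: (comp_root_spec v). Qed.

Definition root_dist v := ex_minn (ex_ball_root v).

Lemma root_dist_spec v : v \in ball S (root_dist v) (comp_root v) /\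
  forall k, v \in ball S k (comp_root v) -> (root_dist v <= k)%N.
Proof. by rewrite /root_dist; case: ex_minnP. Qed.

Definition parent v :=
  odflt v [pick x | (x \in ball S (root_dist v).-1 (comp_root v)) && adj S x v].

Lemma parent_spec v : v \notin roots ->
  adj S (parent v) v /\ (root_dist (parent v) < root_dist v)%N.
Proof.
rewrite inE => hv; have [hd hmin] := root_dist_spec v.
have d_gt0 : (0 < root_dist v)%N.
  by rewrite lt0n; apply: contraNneq hv => d0; move: hd; rewrite d0 ball0.
rewrite /parent; case: pickP => [x /andP [hx ha]|hno] /=.
  have hr : comp_root x = comp_root v.
    by rewrite -(comp_root_idem v); apply/esym/comp_root_eq/(ball_connect hx).
  have [_ hmx] := root_dist_spec x; rewrite -hr in hx; have := hmx _ hx.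
  by split => //; lia.
exfalso; move: hd; rewrite -(prednK d_gt0) => /ballSP [h|[x hx ha]].
  by have := hmin _ h; rewrite leqNgt ltn_predL d_gt0.
by have := hno x; rewrite hx ha.
Qed.

Definition arcs := [set a : 'I_n * 'I_n | a.2 \in S a.1].

Lemma card_arcs : (\sum_u #|S u|)%N = #|arcs|.
Proof.
have card_sum (T : finType) (A : {set T}) : #|A| = (\sum_x (x \in A))%N.
  by rewrite -big_mkcond /= sum1_card.
under eq_bigr do rewrite card_sum.
by rewrite pair_big /= card_sum; apply: eq_bigr => [[a b]] _; rewrite inE.
Qed.

(* Each non-root is charged the arc joining it to its parent; since the parent
   is strictly closer to the root, no arc is charged twice. *)
Definition parent_arc v : 'I_n * 'I_n :=
  if parent v \in S v then (v, parent v) else (parent v, v).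

Lemma card_nonroots : (#|~: roots| <= \sum_u #|S u|)%N.
Proof.
rewrite card_arcs -(card_in_imset (f := parent_arc)).
  apply/subset_leq_card/subsetP => a /imsetP [v]; rewrite in_setC => hv ->.
  have [ha _] := parent_spec hv; rewrite inE /parent_arc.
  by case: ifP => //= h; move: ha; rewrite /adj h.
move=> v v'; rewrite !in_setC => hv hv'.
have [_ d] := parent_spec hv; have [_ d'] := parent_spec hv'.
rewrite /parent_arc; case: ifP; case: ifP => _ _ [e1 e2] //; exfalso;
  [rewrite e2 in d; rewrite -e1 in d' | rewrite e1 in d; rewrite -e2 in d'];
  by move: (ltn_trans d d'); rewrite ltnn.
Qed.

End Components.

Local Open Scope ring_scope.

Lemma ler_sum_subset (R : numDomainType) (I : finType) (P Q : pred I) (F : I -> R) :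
  (forall i, 0 <= F i) -> (forall i, P i -> Q i) ->
  \sum_(i | P i) F i <= \sum_(i | Q i) F i.
Proof.
move=> F_ge0 hPQ; rewrite [X in X <= _]big_mkcond [X in _ <= X]big_mkcond /=.
by apply: ler_sum => i _; case: ifP => hP; [rewrite hPQ | case: ifP].
Qed.

Section LowerBound.
Variables (R : realFieldType) (n : nat) (w : 'I_n -> R) (alpha : R) (beta : nat).
Hypotheses (w_ge0 : forall u, 0 <= w u) (alpha_ge0 : 0 <= alpha).
Local Notation W := (\sum_(u : 'I_n) w u).

Lemma missed_weight_ge (S : profile n) :
  #|roots S|%:R * W - W <= \sum_u \sum_(v | v \notin ball S beta u) w v.
Proof.
have missed_ge0 u : 0 <= \sum_(v | v \notin ball S beta u) w v by exact: sumr_ge0.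
rewrite [X in _ <= X](bigID (mem (roots S))) /=; apply: ler_wpDr; first exact: sumr_ge0.
have root_missed u : u \in roots S ->
    W - \sum_(x | comp_root S x == u) w x <= \sum_(v | v \notin ball S beta u) w v.
  rewrite inE => /eqP hu; rewrite (bigID (fun x => comp_root S x == u)) /= addrC addrK.
  apply: ler_sum_subset => // x; apply: contra => hx; apply/eqP; rewrite hu.
  by apply: comp_root_eq; rewrite (sym_connect_sym (adjC S)); exact: ball_connect hx.
apply: le_trans (ler_sum _ root_missed); rewrite sumrB sumr_const mulr_natl.
apply: lerB => //; rewrite [X in _ <= X](partition_big (comp_root S) (mem (roots S))) //=.
by move=> x _; rewrite inE comp_root_idem.
Qed.

Lemma social_cost_ge (S : profile n) m : (0 < n)%N -> m <= alpha -> m <= W ->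
  (n.-1)%:R * m <= social_cost w alpha beta S.
Proof.
move=> n_gt0 m_le_alpha m_le_W; have c_gt0 := roots_gt0 S n_gt0.
have -> : social_cost w alpha beta S =
    alpha * (\sum_u #|S u|)%:R + \sum_u \sum_(v | v \notin ball S beta u) w v.
  by rewrite /social_cost /cost big_split /= natr_sum mulr_sumr.
have n_split : n.-1 = (#|~: roots S| + #|roots S|.-1)%N.
  by have := cardsC (roots S); rewrite card_ord; lia.
rewrite n_split natrD mulrDl; apply: lerD.
  apply: (@le_trans _ _ (alpha * #|~: roots S|%:R)); first by rewrite mulrC ler_wpM2r.
  by rewrite ler_wpM2l // ler_nat card_nonroots.
apply: le_trans (missed_weight_ge S).
by rewrite -{2}(prednK c_gt0) -addn1 natrD mulrDl mul1r addrK ler_wpM2l.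
Qed.

End LowerBound.

Section Game.
Variables (R : realFieldType) (n : nat) (w : 'I_n -> R) (alpha : R) (beta : nat).
Hypotheses (w_gt0 : forall u, 0 < w u) (alpha_gt0 : 0 < alpha).
Hypotheses (beta_gt1 : (1 < beta)%N) (n_gt0 : (0 < n)%N).
Local Notation W := (\sum_(u : 'I_n) w u).
Local Notation cost := (cost w alpha beta).
Local Notation social_cost := (social_cost w alpha beta).
Local Notation is_NE := (is_NE w alpha beta).
Local Notation opt := (opt w alpha beta).
Implicit Types (S : profile n) (u v x y c : 'I_n) (T : {set 'I_n}).

Lemma w_ge0 u : 0 <= w u. Proof. exact: ltW. Qed.

Lemma sum_but u : \sum_(v | v != u) w v = W - w u.
Proof. by rewrite [in RHS](bigD1 u) //= addrC addrK. Qed.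

Lemma weight_le_sum_but x u : x != u -> w x <= W - w u.
Proof.
move=> hxu; rewrite -sum_but (bigD1 x) //= lerDl.
by apply: sumr_ge0 => v _; exact: w_ge0.
Qed.

Definition loner v : bool := W - w v < alpha.

Definition star_center c : bool := [forall v, (v != c) ==> ~~ loner v].

Definition has_star_center : bool := [exists c, star_center c].

Definition set_strategy S u T : profile n := [ffun y => if y == u then T else S y].

Lemma deviation_set_strategy S u T : valid S -> u \notin T ->
  deviation S (set_strategy S u T) u.
Proof.
move=> /forallP hS hu; split.
  by apply/forallP => y; rewrite ffunE; case: eqP => [->|_].
by move=> v hv; rewrite ffunE (negbTE hv).
Qed.

Lemma missed_le S u : \sum_(v | v \notin ball S beta u) w v <= W - w u.
Proof.
rewrite -sum_but; apply: ler_sum_subset => [|v]; first exact: w_ge0.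
by apply: contraNneq => ->; exact: ball_refl.
Qed.

Lemma links_le_cost S u : alpha * #|S u|%:R <= cost S u.
Proof. by rewrite /cost lerDl; apply: sumr_ge0 => v _; exact: w_ge0. Qed.

Lemma cost_ge0 S u : 0 <= cost S u.
Proof. by apply: le_trans (links_le_cost S u); rewrite mulr_ge0 // ltW. Qed.

Lemma NE_cost_le S u : is_NE S -> cost S u <= W - w u.
Proof.
move=> [hv hNE]; apply: le_trans (hNE u _ (deviation_set_strategy hv (negbT (in_set0 u)))) _.
by rewrite /cost ffunE eqxx cards0 mulr0 add0r missed_le.
Qed.

Lemma NE_loner_links S v : is_NE S -> loner v -> S v = set0.
Proof.
move=> hS hv; apply/eqP; rewrite -cards_eq0; apply: contraTT hv => hne.
rewrite /loner -leNgt; apply: le_trans (NE_cost_le v hS).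
by apply: le_trans (links_le_cost S v); rewrite ler_pMr // ler1n lt0n.
Qed.

(* Dropping the link u -> x saves alpha and can only lose players other than
   a player v who was unreachable before or stays reachable. *)
Lemma NE_drop_link S u x v : is_NE S -> x \in S u ->
  (v \notin ball S beta u) || (v \in ball (set_strategy S u (S u :\ x)) beta u) ->
  ~~ loner v.
Proof.
move=> [hval hNE] hx hv; rewrite /loner -leNgt.
set S' := set_strategy S u (S u :\ x).
have hdev : deviation S S' u.
  by apply: deviation_set_strategy; rewrite // !inE negb_and (forallP hval u) orbT.
have := hNE u S' hdev; rewrite /cost ffunE eqxx (cardsD1 x) hx natrD mulrDr mulr1.
have hsub : ball S' beta u \subset ball S beta u.
  by apply: ball_subprofile => y; rewrite ffunE; case: eqP => [->|_]; rewrite ?subsetDl.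
suff : \sum_(y | y \notin ball S' beta u) w y - \sum_(y | y \notin ball S beta u) w y
    <= W - w v by lra.
rewrite !(big_mkcond (fun y => y \notin _)) -sumrB -sum_but [X in _ <= X]big_mkcond.
apply: ler_sum => y _; have [->|_] /= := eqVneq y v.
  case/orP: hv => hv; first by rewrite hv (contra (subsetP hsub v) hv) subrr.
  by rewrite hv (subsetP hsub _ hv) subrr.
by have := w_ge0 y; do 2 case: ifP => _; lra.
Qed.

Lemma NE_loner_near S u x v : is_NE S -> x \in S u -> loner v -> v \in ball S beta u.
Proof. by move=> hS hx hv; apply: contraLR hv => hnb; rewrite (NE_drop_link hS hx) ?hnb. Qed.

Lemma NE_two_loners S v1 v2 : is_NE S -> v1 != v2 -> loner v1 -> loner v2 ->
  forall u, S u = set0.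
Proof.
move=> hS h12 h1 h2 u; apply/eqP/contraT => /set0Pn [x hx].
have near12 : v2 \in ball S (beta + beta) v1.
  exact: ball_trans (ball_sym (NE_loner_near hS hx h1)) (NE_loner_near hS hx h2).
have [j [z [j_lt hz hzv2 far]]] := ball_last_link near12 h12.
have zv2 : v2 \in S z by move: hzv2; rewrite /adj (NE_loner_links hS h2) inE.
set S' := set_strategy S z (S z :\ v2).
have keep : ball S j v1 \subset ball S' j v1.
  apply: ball_avoid far => a b ha hb; rewrite /adj !ffunE.
  have [eb|_] := eqVneq b z; have [ea|_] := eqVneq a z; subst;
    by rewrite ?inE ?ha ?hb.
suff : (v1 \notin ball S beta z) || (v1 \in ball S' beta z).
  by move/(NE_drop_link hS zv2); rewrite h1.
have [j_le|j_gt] := leqP j beta.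
  by rewrite (ball_mono j_le (ball_sym (subsetP keep _ hz))) orbT.
apply: contraTT far; rewrite negb_or !negbK => /andP [hv1 _].
apply: ball_mono (_ : (beta + 1 <= j)%N) _; first by rewrite addn1.
exact: ball_trans (ball_sym hv1) (ball_adj (ball_refl S 0 z) hzv2).
Qed.

Lemma two_loners : ~~ has_star_center ->
  exists v1 v2, [/\ v1 != v2, loner v1 & loner v2].
Proof.
move=> no_center.
have other_loner c : exists2 v, v != c & loner v.
  move: no_center; rewrite negb_exists => /forallP /(_ c).
  by rewrite negb_forall => /existsP [v]; rewrite negb_imply negbK => /andP [] ; exists v.
have [v1 _ h1] := other_loner (Ordinal n_gt0); have [v2 h21 h2] := other_loner v1.
by exists v1, v2; rewrite eq_sym.
Qed.

Lemma ball_empty k u : ball (empty_profile n) k u = [set u].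
Proof. by apply: ball_isolated => v; rewrite /adj !ffunE !inE. Qed.

Lemma valid_empty : valid (empty_profile n).
Proof. by apply/forallP => u; rewrite ffunE inE. Qed.

Lemma cost_empty u : cost (empty_profile n) u = W - w u.
Proof.
rewrite /cost ffunE cards0 mulr0 add0r ball_empty -sum_but.
by apply: eq_bigl => v; rewrite inE.
Qed.

Lemma social_cost_empty : social_cost (empty_profile n) = (n.-1)%:R * W.
Proof.
rewrite /social_cost; under eq_bigr do rewrite cost_empty.
rewrite sumrB sumr_const card_ord.
have -> : W *+ n = W *+ (n.-1).+1 by rewrite prednK.
by rewrite mulrSr addrK mulr_natl.
Qed.

Lemma NE_empty : (forall x, w x <= alpha) -> is_NE (empty_profile n).
Proof.
move=> w_le; split=> [|u S' [hv' hS']]; first exact: valid_empty.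
rewrite cost_empty -sum_but /cost.
have only_u y : y != u -> S' y = set0 by move=> hy; rewrite hS' // ffunE.
set T := S' u.
have links : alpha * #|T|%:R = \sum_x (if x \in T then alpha else 0).
  by rewrite -big_mkcond /= sumr_const mulr_natr.
have missed : \sum_x (if x \notin u |: T then w x else 0) <=
    \sum_(v | v \notin ball S' beta u) w v.
  rewrite -big_mkcond; apply: ler_sum_subset => [|v]; first exact: w_ge0.
  exact/contra/subsetP/ball_single_buyer.
apply: le_trans (lerD (lexx _) missed); rewrite links -big_split big_mkcond /=.
apply: ler_sum => x _; rewrite !inE.
have [->|hxu] /= := eqVneq x u; first by rewrite (negbTE (forallP hv' u)) add0r.
by have := w_le x; have := w_ge0 x; case: ifP => _ /=; lra.
Qed.

Definition star c : profile n := [ffun y => if y == c then set0 else [set c]].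

Lemma adj_star c y : y != c -> adj (star c) y c.
Proof. by move=> hy; rewrite /adj !ffunE (negbTE hy) inE eqxx orbT. Qed.

Lemma ball_star c u : ball (star c) beta u = setT.
Proof.
apply/setP => v; rewrite inE; apply: ball_mono beta_gt1 _.
have hc : c \in ball (star c) 1 u.
  have [->|huc] := eqVneq u c; first exact: ball_refl.
  exact: ball_adj (ball_refl _ 0 u) (adj_star huc).
have [->|hvc] := eqVneq v c; first exact: ball_step.
by apply: ball_adj hc _; rewrite adjC adj_star.
Qed.

Lemma valid_star c : valid (star c).
Proof. by apply/forallP => u; rewrite ffunE; case: eqP => [_|/eqP]; rewrite inE. Qed.

Lemma cost_star c u : cost (star c) u = if u == c then 0 else alpha.
Proof.
rewrite /cost ball_star big_pred0 => [|v]; last by rewrite inE.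
by rewrite ffunE; case: eqP; rewrite ?cards0 ?cards1 ?mulr0 ?mulr1 addr0.
Qed.

Lemma social_cost_star c : social_cost (star c) = (n.-1)%:R * alpha.
Proof.
rewrite /social_cost; under eq_bigr do rewrite cost_star.
rewrite (bigD1 c) //= eqxx add0r (eq_bigr (fun _ => alpha)) => [|u /negbTE -> //].
rewrite (eq_bigl (fun u => u \in [set~ c])) => [|u]; last by rewrite in_setC1.
by rewrite sumr_const cardsC1 card_ord mulr_natl.
Qed.

Lemma NE_star c : star_center c -> is_NE (star c).
Proof.
move=> /forallP center; split=> [|u S' [hv' hS']]; first exact: valid_star.
rewrite cost_star; case: eqP => [_|/eqP huc]; first exact: cost_ge0.
have [S'u0|/set0Pn [x hx]] := eqVneq (S' u) set0.
  have alone : ball S' beta u = [set u].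
    apply: ball_isolated => v; rewrite /adj S'u0 inE orbF.
    have [->|hvu] := eqVneq v u; first exact: (forallP hv' u).
    by rewrite hS' // ffunE; case: eqP => _; rewrite inE // eq_sym.
  rewrite /cost alone S'u0 cards0 mulr0 add0r.
  rewrite (eq_bigl (fun v => v != u)) => [|v]; last by rewrite inE.
  by rewrite sum_but leNgt (implyP (center u) huc).
apply: le_trans (links_le_cost S' u); rewrite ler_pMr // ler1n.
by rewrite card_gt0; apply/set0Pn; exists x.
Qed.

Lemma connected_star c : graph_connected (star c).
Proof.
have to_c u : connect (adj (star c)) u c.
  by have [->|huc] := eqVneq u c; [exact: connect0 | exact/connect1/adj_star].
move=> u v; apply: connect_trans (to_c u) _.
by rewrite (sym_connect_sym (adjC _)).
Qed.

Lemma star_center_lt c : (1 < n)%N -> star_center c -> alpha < W.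
Proof.
move=> n_gt1 /forallP center.
have /set0Pn [v] : [set~ c] != set0 by rewrite -card_gt0 cardsC1 card_ord -subn1 subn_gt0.
rewrite !inE => hv; apply: le_lt_trans (_ : W - w v < W).
  by rewrite leNgt (implyP (center v) hv).
by rewrite gtrDl oppr_lt0.
Qed.

Lemma NE_eq_empty : ~~ has_star_center -> forall S, is_NE S <-> S = empty_profile n.
Proof.
move=> no_center S; have [v1 [v2 [h12 h1 h2]]] := two_loners no_center.
split=> [hS|->].
  by apply/ffunP => u; rewrite ffunE (NE_two_loners hS h12 h1 h2).
apply: NE_empty => x; apply: ltW.
have [->|hx1] := eqVneq x v1; last exact: le_lt_trans (weight_le_sum_but hx1) h1.
by apply: le_lt_trans h2; rewrite weight_le_sum_but.
Qed.

Lemma star_gameP : (1 < n)%N -> star_game w alpha beta <-> has_star_center.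
Proof.
move=> n_gt1; split=> [[S [hS conn]]|/existsP [c center]]; last first.
  by exists (star c); split; [exact: NE_star | exact: connected_star].
apply: contraPT conn => /NE_eq_empty /(_ S) /iffLR /(_ hS) -> conn.
have [k] := connect_ball (conn (Ordinal n_gt0) (Ordinal n_gt1)).
by rewrite ball_empty inE.
Qed.

Lemma opt_le S : valid S -> opt <= social_cost S.
Proof. exact: bigmin_le_cond. Qed.

Lemma opt_eq : opt = (n.-1)%:R * Num.min alpha W.
Proof.
apply/le_anti/andP; split.
  case: (leP alpha W) => _; last by rewrite -social_cost_empty opt_le ?valid_empty.
  by rewrite -(social_cost_star (Ordinal n_gt0)) opt_le ?valid_star.
apply: le_bigmin => [|S _]; apply: social_cost_ge => //;
  by [exact: w_ge0 | exact: ltW | rewrite ge_min lexx ?orbT].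
Qed.

Lemma PoS_optimal_NE S : is_NE S -> social_cost S = opt -> 0 < opt ->
  PoS_is w alpha beta 1.
Proof.
move=> hS hSopt opt_gt0; split; first by exists S; rewrite hSopt divff ?gt_eqF.
by move=> S' [hv _]; rewrite ler_pdivlMr // mul1r opt_le.
Qed.

Lemma PoS_PoA_unique_NE S0 : (forall S, is_NE S <-> S = S0) ->
  PoS_is w alpha beta (social_cost S0 / opt) /\ PoA_is w alpha beta (social_cost S0 / opt).
Proof.
move=> NE_S0; have hS0 := (NE_S0 S0).2 erefl.
by split; (split; [exists S0 | move=> S /NE_S0 ->]).
Qed.

End Game.

Theorem theorem1 (R : realFieldType) (n : nat) (w : 'I_n -> R) (alpha : R)
  (beta : nat)
  (hw : forall u, 0 < w u) (halpha : 0 < alpha)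
  (hb1 : (1 <= beta)%N) (hbn : (beta <= n.-1)%N) (hbeta : (1 < beta)%N) :
  let W := \sum_(u : 'I_n) w u in
  (star_game w alpha beta -> PoS_is w alpha beta 1) /\
  (~ star_game w alpha beta -> W <= alpha ->
     PoS_is w alpha beta 1 /\ PoA_is w alpha beta 1) /\
  (~ star_game w alpha beta -> alpha < W ->
     PoS_is w alpha beta (W / alpha) /\ PoA_is w alpha beta (W / alpha) /\
     1 < W / alpha).
Proof.
move=> W.
have n_gt1 : (1 < n)%N by lia.
have n_gt0 : (0 < n)%N by lia.
have opt_val := opt_eq hw halpha hbeta n_gt0.
have starP := star_gameP hw halpha hbeta n_gt0 n_gt1.
have n1_gt0 : 0 < (n.-1)%:R :> R by rewrite ltr0n; lia.
have W_gt0 : 0 < W.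
  by rewrite /W (bigD1 (Ordinal n_gt0)) //= ltr_wpDr ?sumr_ge0 // => u _; exact: ltW.
have opt_gt0 : 0 < opt w alpha beta by rewrite opt_val mulr_gt0 // lt_min halpha.
have [/existsP [c center]|no_center] := boolP (has_star_center w alpha).
  have star_holds : star_game w alpha beta by apply/starP/existsP; exists c.
  split=> [_|]; last by split=> /(_ star_holds).
  apply: PoS_optimal_NE (NE_star hw halpha hbeta center) _ opt_gt0.
  by rewrite social_cost_star // opt_val min_l // ltW // (star_center_lt hw n_gt1 center).
have no_star : ~ star_game w alpha beta by move=> /starP; apply/negP.
have [PoS PoA] := PoS_PoA_unique_NE (NE_eq_empty beta hw halpha n_gt0 no_center).
rewrite social_cost_empty // opt_val in PoS PoA.
split=> [/no_star //|]; split=> _ W_alpha.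
  by rewrite min_r // divff ?gt_eqF ?mulr_gt0 in PoS PoA.
have ratio : (n.-1)%:R * W / ((n.-1)%:R * alpha) = W / alpha.
  by field; rewrite !gt_eqF.
rewrite min_l ?ltW // ratio in PoS PoA.
by rewrite ltr_pdivlMr // mul1r.
Qed.
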